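(* The path collection $\mathcal{P}_{light}=\{\Pi_{\langle x,y\rangle}:\langle x,y\rangle\text{ is an ordered light pair}\}$ satisfies: every path in $\mathcal{P}_{light}$ has length $O(D)$, and every edge of $G$ appears in at most $\widetilde{O}(D)$ paths of $\mathcal{P}_{light}$.
   Context: $G=(V,E)$ is a connected $n$-vertex graph of diameter $D$ with no cut vertex, $T$ a BFS tree rooted at $s$, $\pi(u,v)$ the $T$-path, $T_x$ the subtree at $x$, $V_x=V(T_x)\setminus\{x\}$; $\widetilde{O}$ hides polylog$(n)$ factors. The heavy child $x_h$ of a non-leaf $x$ is the child with largest subtree (ties broken consistently); other children and their edges to $x$ are light. $\mathcal{C}_x$ is the set of components of $G[V_x]$, $C_{x,v}$ the one containing $v$; for each $C\in\mathcal{C}_x$ a fixed edge $(u_C,v_C)\in E$ with $v_C\in C$, $u_C\notin V(T_x)$, and $\pi_x(s,C)=\pi(s,u_C)\circ(u_C,v_C)$. $x,y$ is independent if neither is a $T$-ancestor of the other. For independent $x,y$, $C\in\mathcal{C}_x$ is fully-$y$-sensitive if $y\in\pi_x(s,C)$ and $\pi_x(s,C)$ contains no $T$-edge $(y,y')$ with $x\notin\pi_y(s,C_{y,y'})$; $\mathcal{FS}(x,y)$ is the set of such components. An ordered independent pair $\langle x,y\rangle$ is an ordered light pair if there is $C\in\mathcal{FS}(x,y)$ with $(y,y_h)\notin\pi_x(s,C)$. For each ordered light pair choose arbitrarily such a component $C^{\langle x,y\rangle}$ and let $\Pi_{\langle x,y\rangle}=\pi(x,v_{C^{\langle x,y\rangle}})\circ(v_{C^{\langle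 x,y\rangle}},u_{C^{\langle x,y\rangle}})\circ\pi(u_{C^{\langle x,y\rangle}},y)$. *)

From mathcomp Require Import all_boot.
Set Implicit Arguments. Unset Strict Implicit. Unset Printing Implicit Defensive.

(* Simple undirected graph: vertex type V (finite), adjacency e (symmetric,
   irreflexive).  BFS tree T given by a parent function p rooted at s. *)

Section Graph.
Variables (V : finType) (e : rel V).

Fixpoint reach (k : nat) (u v : V) : bool :=
  if k is k'.+1 then (u == v) || [exists w, e u w && reach k' w v]
  else u == v.

(* graph distance (hop count); for reachable pairs it is < #|V| *)
Definition dist (u v : V) : nat := find (fun k => reach k u v) (iota 0 #|V|.+1).

Definition diameter : nat := \max_(u : V) \max_(v : V) dist u v.

Definition connected_graph : Prop := forall u v : V, connect e u v.

Definition no_cut_vertex : Prop :=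
  forall w u v : V, u != w -> v != w ->
    connect [rel a b | e a b && (a != w) && (b != w)] u v.

Definition simple_graph : Prop := symmetric e /\ irreflexive e.

Definition induced (S : {set V}) : rel V := [rel a b | e a b && (a \in S) && (b \in S)].
Definition comp (S : {set V}) (v : V) : {set V} := [set w in S | connect (induced S) v w].
Definition comps (S : {set V}) : {set {set V}} := [set comp S v | v in S].

Variables (s : V) (p : V -> V).

Definition bfs_tree : Prop :=
  p s = s /\ forall v, v != s -> e v (p v) /\ (dist s (p v)).+1 = dist s v.

Definition depth (v : V) : nat := dist s v.

Definition anc (a v : V) : bool := [exists k : 'I_#|V|.+1, iter k p v == a].

Definition subtree (x : V) : {set V} := [set v | anc x v].
Definition Vx (x : V) : {set V} := subtree x :\ x.
Definition children (x : V) : {set V} := [set v | (v != s) && (p v == x)].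

Definition indep (x y : V) : bool := ~~ anc x y && ~~ anc y x.

Definition lca (u v : V) : V := [arg max_(a > s | anc a u && anc a v) depth a].

Definition tpath (u v : V) : seq V :=
  let a := lca u v in
  traject p u (depth u - depth a).+1 ++ rev (traject p v (depth v - depth a)).

Definition edge_on (a b : V) (q : seq V) : bool :=
  let prs := zip q (behead q) in ((a, b) \in prs) || ((b, a) \in prs).

Variable h : V -> V. (* heavy child *)
Variable sel : V -> {set V} -> V * V. (* (u_C, v_C) for C in C_x *)

Definition pix (x : V) (C : {set V}) : seq V :=
  tpath s (sel x C).1 ++ [:: (sel x C).2].

Definition fully_sensitive (x y : V) (C : {set V}) : bool :=
  (y \in pix x C) &&
  [forall y', ((y' \in children y) && edge_on y y' (pix x C)) ==>
              (x \in pix y (comp (Vx y) y'))].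

Definition light_witness (x y : V) (C : {set V}) : bool :=
  [&& indep x y, C \in comps (Vx x), fully_sensitive x y C &
      ~~ ((children y != set0) && edge_on y (h y) (pix x C))].

Definition light_pair (x y : V) : bool := [exists C, light_witness x y C].

Variable pick : V -> V -> {set V}. (* C^{<x,y>} *)

Definition Pi (x y : V) : seq V :=
  let C := pick x y in tpath x (sel x C).2 ++ tpath (sel x C).1 y.

Definition heavy_child_ok : Prop :=
  forall x, children x != set0 ->
    h x \in children x /\ forall c, c \in children x -> #|subtree c| <= #|subtree (h x)|.

Definition sel_ok : Prop :=
  forall x C, x != s -> C \in comps (Vx x) ->
    [&& e (sel x C).1 (sel x C).2, (sel x C).2 \in C & (sel x C).1 \notin subtree x].

Definition pick_ok : Prop :=
  forall x y, light_pair x y -> light_witness x y (pick x y).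

End Graph.

From mathcomp Require Import all_boot zify.
Set Implicit Arguments. Unset Strict Implicit. Unset Printing Implicit Defensive.

(* Pi_<x,y> descends in T from x to v_C, crosses the edge (v_C, u_C) and climbs
   from u_C to y, so its length is at most 4D + 1.  For the congestion, an edge
   (a, b) of Pi_<x,y> has an endpoint w from which <x,y> can be recovered up to
   O(D log n) choices.  If w is on the descending part, x is one of the D + 1
   ancestors of w, C = C_{x,w}, and y is u_C or the parent of one of the light
   ancestors of u_C.  If w is on the climbing part, the child y' of y towards w
   is light (otherwise the heavy edge (y, y_h) would lie on pi_x(s,C)), so y is
   the parent of a light ancestor of w, and full sensitivity puts x on
   pi_y(s, C_{y,y'}), a path with at most D + 2 vertices.  Finally a vertex has
   at most log2 n light ancestors, since the subtree size more than doubles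
   across every light edge. *)

Section Steps.
Variable T : eqType.

Definition steps (q : seq T) : seq (T * T) := zip q (behead q).

Lemma size_steps q : size (steps q) = (size q).-1.
Proof. by rewrite size_zip size_behead; case: q => //= _ q; lia. Qed.

Lemma stepsP (x0 : T) q a b :
  reflect (exists2 i, i.+1 < size q & nth x0 q i = a /\ nth x0 q i.+1 = b)
          ((a, b) \in steps q).
Proof.
apply: (iffP (nthP (x0, x0))) => [[i lt_i]|[i lt_i [<- <-]]].
  rewrite nth_zip_cond lt_i nth_behead => -[Ea Eb].
  by exists i => //; move: lt_i; rewrite size_steps; lia.
exists i; first by rewrite size_steps; lia.
by rewrite nth_zip_cond size_steps ifT ?nth_behead //; lia.
Qed.

Lemma steps_traject (f : T -> T) x n a b :
  reflect (exists2 i, i.+1 < n & a = iter i f x /\ b = iter i.+1 f x)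
          ((a, b) \in steps (traject f x n)).
Proof.
apply: (iffP (stepsP x _ _ _)); rewrite size_traject => -[i lt_i [Ea Eb]];
  exists i => //.
  by rewrite -Ea -Eb !nth_traject //; lia.
by rewrite Ea Eb !nth_traject //; lia.
Qed.

Lemma mem_steps_rev q a b : ((a, b) \in steps (rev q)) = ((b, a) \in steps q).
Proof.
suff rev_step r c d : (c, d) \in steps (rev r) -> (d, c) \in steps r.
  by apply/idP/idP => [/rev_step //|]; rewrite -{1}(revK q) => /rev_step.
case/(stepsP c) => i; rewrite size_rev => lt_i [Ec Ed]; apply/(stepsP c).
exists (size r - i.+2); first lia.
by split; [rewrite -Ed | rewrite -[RHS]Ec]; rewrite nth_rev; try congr nth; lia.
Qed.

Lemma steps_cat x q1 y q2 :
  steps (x :: q1 ++ y :: q2) = steps (x :: q1) ++ (last x q1, y) :: steps (y :: q2).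
Proof. by elim: q1 x => // z q1 IH x; exact: (congr1 (cons (x, z)) (IH z)). Qed.

Lemma mem_steps_catl q1 q2 a b :
  (a, b) \in steps q1 -> (a, b) \in steps (q1 ++ q2).
Proof.
case: q1 => // x q1; case: q2 => [|y q2]; first by rewrite cats0.
by rewrite steps_cat mem_cat => ->.
Qed.

Lemma mem_steps_rcons_cat q1 x y q2 a b :
  (a, b) \in steps (rcons q1 x ++ y :: q2) ->
  [\/ (a, b) \in steps (rcons q1 x), (a, b) = (x, y) | (a, b) \in steps (y :: q2)].
Proof.
case: q1 => [|z q1]; first by rewrite (steps_cat x [::]) inE => /orP [/eqP|]; constructor.
rewrite rcons_cons cat_cons steps_cat last_rcons mem_cat inE.
by case/or3P => [|/eqP|]; constructor.
Qed.

End Steps.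

Lemma card_bigcup_leq_sum (I T : finType) (A : {pred I}) (F : I -> {set T}) :
  #|\bigcup_(i in A) F i| <= \sum_(i in A) #|F i|.
Proof.
elim/big_rec2: _ => [|i n B _ IH]; first by rewrite cards0.
exact: leq_trans (leq_card_setU _ _) (leq_add (leqnn _) IH).
Qed.

Section Components.
Variables (V : finType) (e : rel V).
Hypothesis e_sym : symmetric e.

Lemma induced_sym (S : {set V}) : symmetric (induced e S).
Proof. by move=> a b; rewrite /induced /= e_sym -!andbA [(a \in S) && _]andbC. Qed.

Lemma comp_connect (S : {set V}) a b :
  connect (induced e S) a b -> comp e S a = comp e S b.
Proof.
move=> ab; apply/setP => w; rewrite !inE.
by rewrite (same_connect (sym_connect_sym (induced_sym S)) ab).
Qed.

Lemma comps_sub (S C : {set V}) : C \in comps e S -> C \subset S.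
Proof. by case/imsetP => c _ ->; apply/subsetP => w; rewrite inE => /andP []. Qed.

Lemma comps_comp (S C : {set V}) w : C \in comps e S -> w \in C -> C = comp e S w.
Proof.
case/imsetP => c _ -> /[dup] wC; rewrite inE => /andP [_ cw].
exact: comp_connect.
Qed.

End Components.

Section BFSTree.
Variables (V : finType) (e : rel V) (s : V) (p : V -> V).
Hypothesis bfsT : bfs_tree e s p.
Hypothesis e_sym : symmetric e.

Local Notation depth := (depth e s).
Local Notation anc := (anc p).
Local Notation tpath := (tpath e s p).

Lemma depth_root : depth s = 0.
Proof. by rewrite /depth /dist /= eqxx. Qed.

Lemma parent_root : p s = s.
Proof. by case: bfsT. Qed.

Lemma depth_parent v : v != s -> (depth (p v)).+1 = depth v.
Proof. by case: bfsT => _ /[apply] -[]. Qed.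

Lemma edge_parent v : v != s -> e v (p v).
Proof. by case: bfsT => _ /[apply] -[]. Qed.

Lemma depth_eq0 v : (depth v == 0) = (v == s).
Proof.
apply/eqP/eqP => [|->]; last exact: depth_root.
by case: (eqVneq v s) => // /depth_parent <-.
Qed.

Lemma iter_root k : iter k p s = s.
Proof. by elim: k => //= k ->; exact: parent_root. Qed.

Lemma depth_iter k v : depth (iter k p v) = depth v - k.
Proof.
elim: k => [|k IH]; first by rewrite subn0.
rewrite iterS; case: (eqVneq (iter k p v) s) => [Es|ns].
  by rewrite Es parent_root depth_root; rewrite Es depth_root in IH; lia.
by have := depth_parent ns; rewrite IH; lia.
Qed.

Lemma iter_depth v : iter (depth v) p v = s.
Proof. by apply/eqP; rewrite -depth_eq0 depth_iter subnn. Qed.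

Lemma iter_geq_depth k v : depth v <= k -> iter k p v = s.
Proof. by move=> le_vk; rewrite -(subnK le_vk) iterD iter_depth iter_root. Qed.

Lemma depth_lt_card v : depth v < #|V|.
Proof.
pose f (k : 'I_(depth v).+1) := iter k p v.
have f_inj : injective f.
  move=> i j /(congr1 depth); rewrite !depth_iter => Eij; apply: val_inj => /=.
  by have := ltn_ord i; have := ltn_ord j; lia.
by have := leq_card f f_inj; rewrite card_ord.
Qed.

Lemma ancP a v : reflect (exists2 k, k <= depth v & iter k p v = a) (anc a v).
Proof.
apply: (iffP existsP) => [[k /eqP <-]|[k le_k <-]].
  case: (leqP k (depth v)) => [le_k|lt_k]; first by exists k.
  by exists (depth v) => //; rewrite iter_depth iter_geq_depth // ltnW.
have lt_k : k < #|V|.+1 by have := depth_lt_card v; lia.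
by exists (Ordinal lt_k).
Qed.

Lemma anc_iter k v : anc (iter k p v) v.
Proof.
case: (leqP k (depth v)) => [le_k|lt_k]; first by apply/ancP; exists k.
by apply/ancP; exists (depth v); rewrite ?iter_depth ?iter_geq_depth // ltnW.
Qed.

Lemma anc_refl v : anc v v. Proof. exact: (anc_iter 0). Qed.

Lemma anc_parent v : anc (p v) v. Proof. exact: (anc_iter 1). Qed.

Lemma anc_root v : anc s v. Proof. by rewrite -(iter_depth v) anc_iter. Qed.

Lemma anc_depth a v : anc a v -> depth a <= depth v.
Proof. by case/ancP => k _ <-; rewrite depth_iter leq_subr. Qed.

Lemma iter_anc a v : anc a v -> iter (depth v - depth a) p v = a.
Proof. by case/ancP => k le_k <-; rewrite depth_iter subKn. Qed.

Lemma anc_depth_eq a v : anc a v -> depth v <= depth a -> a = v.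
Proof.
move=> av le_va; rewrite -(iter_anc av).
by have -> : depth v - depth a = 0 by lia.
Qed.

Lemma anc_trans : transitive anc.
Proof. by move=> b a c /iter_anc <- /iter_anc <-; rewrite -iterD anc_iter. Qed.

Lemma anc_rootE a : anc a s = (a == s).
Proof.
apply/idP/eqP => [as_|->]; last exact: anc_refl.
by apply: anc_depth_eq as_ _; rewrite depth_root.
Qed.

Lemma anc_parentE a w : w != s -> anc a w = (a == w) || anc a (p w).
Proof.
move=> ws; apply/idP/orP => [|[/eqP ->|]]; last 2 first.
- exact: anc_refl.
- by move/anc_trans; apply; exact: anc_parent.
by case/ancP => [[|k]] _ <-; [left | right; rewrite iterSr anc_iter].
Qed.

Lemma anc_linear a b v : anc a v -> anc b v -> depth a <= depth b -> anc a b.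
Proof.
move=> av bv le_ab; rewrite -(iter_anc av) -(iter_anc bv).
by rewrite -[depth v - depth a](subnK (leq_sub2l (depth v) le_ab)) iterD anc_iter.
Qed.

Lemma lca_ancl a b : anc a b -> lca e s p a b = a.
Proof.
move=> ab; rewrite /lca; case: arg_maxnP => [|c /andP [ca _] max_c].
  by rewrite !anc_root.
by apply: anc_depth_eq ca _; apply: max_c; rewrite anc_refl ab.
Qed.

Lemma lca_ancr a b : anc b a -> lca e s p a b = b.
Proof.
move=> ba; rewrite /lca; case: arg_maxnP => [|c /andP [_ cb] max_c].
  by rewrite !anc_root.
by apply: anc_depth_eq cb _; apply: max_c; rewrite anc_refl ba.
Qed.

Lemma tpath_anc a b : anc a b -> tpath a b = rev (traject p b (depth b - depth a).+1).
Proof.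
move=> ab; rewrite /tpath lca_ancl // subnn [in RHS]trajectSr rev_rcons.
by rewrite iter_anc.
Qed.

Lemma tpath_desc a b : anc b a -> tpath a b = traject p a (depth a - depth b).+1.
Proof. by move=> ba; rewrite /tpath lca_ancr // subnn cats0. Qed.

Lemma size_tpath a b : size (tpath a b) <= depth a + depth b + 1.
Proof. rewrite /tpath size_cat size_rev !size_traject; lia. Qed.

Lemma depth_le_diameter v : depth v <= diameter e.
Proof.
apply: leq_trans (leq_bigmax (F := fun v => dist e s v) v) _.
exact: (leq_bigmax (F := fun u => \max_(v : V) dist e u v) s).
Qed.

Lemma root_notin_Vx x : s \notin Vx p x.
Proof. by rewrite !inE anc_rootE eq_sym andNb. Qed.

Lemma iter_in_Vx x v j : anc x v -> j < depth v - depth x -> iter j p v \in Vx p x.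
Proof.
move=> xv lt_j; rewrite !inE; apply/andP; split.
  by apply: contraTneq lt_j => Ex; rewrite -leqNgt -Ex depth_iter; lia.
by apply: anc_linear xv (anc_iter j v) _; rewrite depth_iter; lia.
Qed.

Lemma comp_Vx_iter x v j : anc x v -> j < depth v - depth x ->
  comp e (Vx p x) (iter j p v) = comp e (Vx p x) v.
Proof.
move=> xv; elim: j => [|j IH] lt_j //; rewrite -IH ?(ltnW lt_j) //.
apply/esym/(comp_connect e_sym)/connect1.
rewrite /induced /= -iterS !iter_in_Vx ?(ltnW lt_j) // !andbT iterS edge_parent //.
by apply: contraTneq (iter_in_Vx xv (ltnW lt_j)) => ->; rewrite root_notin_Vx.
Qed.

Variable h : V -> V.
Hypothesis heavyT : heavy_child_ok s p h.

Local Notation subtree := (subtree p).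

Definition light_anc w : {set V} := [set y | [&& anc y w, y != s & y != h (p y)]].

Lemma subtree_parent w : subtree w \subset subtree (p w).
Proof. by apply/subsetP => v; rewrite !inE; apply: anc_trans; exact: anc_parent. Qed.

Lemma light_subtree_double w : w != s -> w != h (p w) ->
  (#|subtree w|).*2 < #|subtree (p w)|.
Proof.
move=> ws w_light.
have w_child : w \in children s p (p w) by rewrite inE ws eqxx.
have nonleaf : children s p (p w) != set0 by apply/set0Pn; exists w.
case: (heavyT nonleaf); rewrite inE => /andP [hs /eqP p_h] /(_ w w_child) le_wh.
have depth_h : depth (h (p w)) = depth w by rewrite -(depth_parent hs) p_h depth_parent.
have disj : [disjoint subtree w & subtree (h (p w))].
  apply/pred0P => v /=; rewrite !inE; apply/negP => /andP [/iter_anc Ew /iter_anc Eh].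
  by rewrite depth_h in Eh; move: w_light; rewrite -{1}Ew -Eh eqxx.
have below_pw c : c != s -> p c = p w -> subtree c \subset subtree (p w) :\ p w.
  move=> cs p_c; apply/subsetP => v; rewrite !inE => cv.
  rewrite -p_c (anc_trans (anc_parent c) cv) andbT.
  by apply: contraTneq (anc_depth cv) => ->; rewrite -ltnNge -(depth_parent cs) ltnSn.
have sub : subtree w :|: subtree (h (p w)) \subset subtree (p w) :\ p w.
  by rewrite subUset !below_pw.
have := subset_leq_card sub; rewrite cardsU (disjoint_setI0 disj) cards0 subn0.
rewrite (cardsD1 (p w) (subtree (p w))) inE anc_refl; lia.
Qed.

Lemma light_anc_root : light_anc s = set0.
Proof. by apply/setP => y; rewrite !inE anc_rootE; case: eqP. Qed.

Lemma light_anc_parent w : w != s -> light_anc w \subset w |: light_anc (p w).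
Proof.
move=> ws; apply/subsetP => y; rewrite !inE (anc_parentE _ ws).
by case/and3P => /orP [->|->] -> ->; rewrite ?orbT.
Qed.

Lemma light_anc_heavy w : w != s -> w = h (p w) -> light_anc w \subset light_anc (p w).
Proof.
move=> ws w_heavy; apply/subsetP => y; rewrite !inE (anc_parentE _ ws).
case/and3P => /orP [/eqP Ey|->] -> // y_light.
by rewrite Ey -w_heavy eqxx in y_light.
Qed.

Lemma light_anc_weight w : 2 ^ #|light_anc w| * #|subtree w| <= #|V|.
Proof.
have [n] := ubnP (depth w); elim: n w => // n IH w lt_wn.
case: (eqVneq w s) => [->|ws]; first by rewrite light_anc_root cards0 mul1n max_card.
have /IH IHp : depth (p w) < n by rewrite -ltnS depth_parent.
apply: leq_trans IHp; case: (eqVneq w (h (p w))) => [w_heavy|w_light].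
  apply: leq_mul; last exact: subset_leq_card (subtree_parent w).
  by rewrite leq_pexp2l // subset_leq_card // light_anc_heavy.
have le_L : #|light_anc w| <= #|light_anc (p w)|.+1.
  apply: leq_trans (subset_leq_card (light_anc_parent ws)) _.
  by rewrite cardsU1 -add1n leq_add2r leq_b1.
apply: leq_trans (leq_mul (leq_pexp2l (isT : 0 < 2) le_L) (leqnn _)) _.
rewrite expnS -mulnA mulnCA leq_mul2l mul2n.
by apply/orP; right; apply/ltnW/light_subtree_double.
Qed.

Lemma card_light_anc w : #|light_anc w| <= trunc_log 2 #|V|.
Proof.
apply: trunc_log_max => //; apply: leq_trans (light_anc_weight w).
by rewrite leq_pmulr // (cardD1 w) inE anc_refl.
Qed.

Variables (sel : V -> {set V} -> V * V) (pick : V -> V -> {set V}).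
Hypothesis selT : sel_ok e s p sel.
Hypothesis pickT : pick_ok e s p h sel pick.

Local Notation pix := (pix e s p sel).
Local Notation Pi := (Pi e s p sel pick).
Local Notation light_pair := (light_pair e s p h sel).
Local Notation uC x y := (sel x (pick x y)).1.
Local Notation vC x y := (sel x (pick x y)).2.

Lemma pixE x C :
  pix x C = rev (traject p (sel x C).1 (depth (sel x C).1).+1) ++ [:: (sel x C).2].
Proof. by rewrite /pix tpath_anc ?anc_root // depth_root subn0. Qed.

Lemma PiE x y : anc x (vC x y) -> anc y (uC x y) ->
  Pi x y = rev (traject p (vC x y) (depth (vC x y) - depth x).+1)
           ++ traject p (uC x y) (depth (uC x y) - depth y).+1.
Proof. by move=> xv yu; rewrite /Pi tpath_anc // tpath_desc. Qed.

Lemma light_pair_down x y : light_pair x y ->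
  [/\ x != s, pick x y \in comps e (Vx p x) & vC x y \in pick x y].
Proof.
move/pickT => /and4P [/andP [nxy _] Cx _ _].
have xs : x != s by apply: contraNneq nxy => ->; exact: anc_root.
by have /and3P [] := selT xs Cx.
Qed.

Lemma light_pair_Vx x y : light_pair x y -> vC x y \in Vx p x.
Proof. by case/light_pair_down => _ /comps_sub /subsetP; apply. Qed.

Lemma light_pair_up x y : light_pair x y -> anc y (uC x y).
Proof.
move=> lxy; have /pickT /and4P [/andP [nxy _] _ /andP [y_pix _] _] := lxy.
move: y_pix; rewrite pixE mem_cat mem_rev mem_seq1 => /orP [/trajectP [k _ Ey]|/eqP yv].
  by rewrite {1}Ey anc_iter.
by have := light_pair_Vx lxy; rewrite -yv !inE (negbTE nxy) andbF.
Qed.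

Lemma light_pair_up_child x y : light_pair x y -> uC x y != y ->
  exists2 y', anc y' (uC x y) &
    [/\ y' != s, p y' = y, y' != h y & x \in pix y (comp e (Vx p y) y')].
Proof.
move=> lxy uy; have yu := light_pair_up lxy.
have /pickT /and4P [/andP [_ nyx] _ /andP [_ sensitive] not_heavy] := lxy.
have ys : y != s by apply: contraNneq nyx => ->; exact: anc_root.
have lt_yu : depth y < depth (uC x y).
  rewrite ltn_neqAle anc_depth // andbT.
  by apply: contra_neq uy => Edepth; apply/esym/(anc_depth_eq yu); rewrite Edepth.
set k := (depth (uC x y) - depth y).-1.
have Ek : k.+1 = depth (uC x y) - depth y by rewrite /k; lia.
set y' := iter k p (uC x y).
have py' : p y' = y by rewrite /y' -iterS Ek iter_anc.
have y's : y' != s by apply: contra_neq ys => y's; rewrite -py' y's parent_root.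
have y'_child : y' \in children s p y by rewrite inE y's py' eqxx.
have y'_on_pix : edge_on y y' (pix x (pick x y)).
  rewrite /edge_on /= -/(steps _) pixE; apply/orP; left; apply: mem_steps_catl.
  rewrite mem_steps_rev; apply/steps_traject; exists k; first lia.
  by rewrite iterS -/y' py'.
exists y'; first exact: anc_iter.
split=> //.
  apply: contra not_heavy => /eqP <-; rewrite y'_on_pix andbT.
  by apply/set0Pn; exists y'.
by move/forallP: sensitive => /(_ y'); rewrite y'_child y'_on_pix.
Qed.

Definition ancestors w : {set V} := [set a | anc a w].

Definition up_ends u : {set V} := u |: [set p y' | y' in light_anc u].

Definition down_pairs w : {set V * V} :=
  \bigcup_(x in ancestors w) [set (x, y) | y in up_ends (sel x (comp e (Vx p x) w)).1].

Definition up_pairs w : {set V * V} :=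
  \bigcup_(y' in light_anc w) [set (x, p y') | x in pix (p y') (comp e (Vx p (p y')) y')].

Definition pairs_through w : {set V * V} := down_pairs w :|: up_pairs w.

Lemma up_ends_light_pair x y : light_pair x y -> y \in up_ends (uC x y).
Proof.
move=> lxy; case: (eqVneq (uC x y) y) => [Eu|uy]; first by rewrite -{1}Eu setU11.
have [y' y'u [y's py' y'_light _]] := light_pair_up_child lxy uy.
by apply/setU1P; right; apply/imsetP; exists y'; rewrite // !inE y'u y's py'.
Qed.

Lemma down_pairs_light x y w : light_pair x y -> w \in pick x y -> (x, y) \in down_pairs w.
Proof.
move=> lxy wC; have [_ Cx _] := light_pair_down lxy.
have /subsetP /(_ w wC) := comps_sub Cx; rewrite !inE => /andP [_ xw].
apply/bigcupP; exists x; first by rewrite inE.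
rewrite -(comps_comp e_sym Cx wC); apply/imsetP.
by exists y; first exact: up_ends_light_pair.
Qed.

Lemma up_pairs_light x y w : light_pair x y -> anc w (uC x y) -> depth y < depth w ->
  (x, y) \in up_pairs w.
Proof.
move=> lxy wu lt_yw.
have uy : uC x y != y by apply: contraTneq lt_yw => <-; rewrite -leqNgt anc_depth.
have [y' y'u [y's py' y'_light x_pix]] := light_pair_up_child lxy uy.
have y'w : anc y' w by apply: anc_linear y'u wu _; rewrite -(depth_parent y's) py'.
apply/bigcupP; exists y'; first by rewrite !inE y'w y's py'.
by rewrite py'; apply/imsetP; exists x.
Qed.

Lemma light_pair_steps x y a b : light_pair x y -> (a, b) \in steps (Pi x y) ->
  (x, y) \in pairs_through a :|: pairs_through b.
Proof.
move=> lxy; have [_ Cx v_in_C] := light_pair_down lxy; have yu := light_pair_up lxy.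
have xv : anc x (vC x y) by have := light_pair_Vx lxy; rewrite !inE => /andP [].
rewrite PiE //; set v := vC x y in v_in_C xv *.
rewrite !trajectS rev_cons; case/mem_steps_rcons_cat => [|[-> _]|].
- rewrite -rev_cons -trajectS mem_steps_rev => /steps_traject [i lt_i [-> _]].
  apply/setUP; right; apply/setUP; left; apply: down_pairs_light => //.
  rewrite (comps_comp e_sym Cx v_in_C) -(comp_Vx_iter xv lt_i) inE connect0 andbT.
  exact: iter_in_Vx.
- by apply/setUP; left; apply/setUP; left; apply: down_pairs_light.
- rewrite -trajectS => /steps_traject [i lt_i [-> _]].
  apply/setUP; left; apply/setUP; right; apply: up_pairs_light; rewrite ?anc_iter //.
  by rewrite depth_iter; lia.
Qed.

Lemma card_ancestors w : #|ancestors w| <= (depth w).+1.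
Proof.
have -> : ancestors w = [set iter k p w | k : 'I_(depth w).+1].
  apply/setP => a; rewrite !inE; apply/ancP/imsetP => [[k le_k <-]|[k _ ->]].
    by exists (Ordinal (le_k : k < (depth w).+1)).
  by exists k; rewrite // -ltnS.
by rewrite (leq_trans (leq_imset_card _ _)) // card_ord.
Qed.

Lemma card_up_ends u : #|up_ends u| <= (trunc_log 2 #|V|).+1.
Proof.
rewrite cardsU1 -add1n leq_add ?leq_b1 //.
exact: leq_trans (leq_imset_card _ _) (card_light_anc u).
Qed.

Lemma size_pix y C : size (pix y C) <= (diameter e).+2.
Proof.
rewrite size_cat addn1 ltnS (leq_trans (size_tpath _ _)) //.
by rewrite depth_root add0n addn1 ltnS depth_le_diameter.
Qed.

Lemma card_down_pairs w :
  #|down_pairs w| <= (diameter e).+1 * (trunc_log 2 #|V|).+1.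
Proof.
apply: leq_trans (card_bigcup_leq_sum _ _) _.
apply: (@leq_trans (\sum_(x in ancestors w) (trunc_log 2 #|V|).+1)).
  by apply: leq_sum => x _; exact: leq_trans (leq_imset_card _ _) (card_up_ends _).
rewrite sum_nat_const leq_mul2r; apply/orP; right.
by rewrite (leq_trans (card_ancestors w)) // ltnS depth_le_diameter.
Qed.

Lemma card_up_pairs w : #|up_pairs w| <= trunc_log 2 #|V| * (diameter e).+2.
Proof.
apply: leq_trans (card_bigcup_leq_sum _ _) _.
apply: (@leq_trans (\sum_(y' in light_anc w) (diameter e).+2)).
  apply: leq_sum => y' _.
  exact: leq_trans (leq_imset_card _ _) (leq_trans (card_size _) (size_pix _ _)).
by rewrite sum_nat_const leq_mul2r card_light_anc orbT.
Qed.

Lemma card_pairs_through w :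
  #|pairs_through w| <= 2 * ((diameter e).+2 * (trunc_log 2 #|V|).+1).
Proof.
apply: leq_trans (leq_card_setU _ _) _; rewrite mul2n -addnn leq_add //.
  by apply: leq_trans (card_down_pairs w) _; rewrite leq_mul2r ltnS leqnSn orbT.
by apply: leq_trans (card_up_pairs w) _; rewrite mulnC leq_mul2l leqnSn orbT.
Qed.

Lemma card_light_pairs_on_edge a b :
  #|[set xy : V * V | light_pair xy.1 xy.2 && edge_on a b (Pi xy.1 xy.2)]|
    <= 4 * ((diameter e).+2 * (trunc_log 2 #|V|).+1).
Proof.
have covered : [set xy : V * V | light_pair xy.1 xy.2 && edge_on a b (Pi xy.1 xy.2)]
    \subset pairs_through a :|: pairs_through b.
  apply/subsetP => -[x y]; rewrite inE /edge_on /= -!/(steps _) => /andP [lxy].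
  case/orP => [|/(light_pair_steps lxy)]; first exact: light_pair_steps.
  by rewrite setUC.
apply: leq_trans (subset_leq_card covered) _; apply: leq_trans (leq_card_setU _ _) _.
by rewrite (mulnDl 2 2) leq_add ?card_pairs_through.
Qed.

Lemma size_Pi x y : (size (Pi x y)).-1 <= 4 * diameter e + 1.
Proof.
rewrite size_cat; have := size_tpath x (vC x y); have := size_tpath (uC x y) y.
have := depth_le_diameter x; have := depth_le_diameter y.
have := depth_le_diameter (uC x y); have := depth_le_diameter (vC x y); lia.
Qed.

Lemma light_pair_diameter_gt0 x y : light_pair x y -> 0 < diameter e.
Proof.
case/light_pair_down => xs _ _; apply: leq_trans (depth_le_diameter x).
by rewrite lt0n depth_eq0.
Qed.

End BFSTree.

Theorem lemma4p19 :
  exists c k : nat,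
  forall (V : finType) (e : rel V) (s : V) (p h : V -> V)
         (sel : V -> {set V} -> V * V) (pick : V -> V -> {set V}),
    simple_graph e -> connected_graph e -> no_cut_vertex e ->
    bfs_tree e s p ->
    heavy_child_ok s p h ->
    sel_ok e s p sel ->
    pick_ok e s p h sel pick ->
    (forall x y, light_pair e s p h sel x y ->
       (size (Pi e s p sel pick x y)).-1 <= c * diameter e) /\
    (forall a b, e a b ->
       #|[set xy : V * V | light_pair e s p h sel xy.1 xy.2 &&
                            edge_on a b (Pi e s p sel pick xy.1 xy.2)]|
         <= c * diameter e * (trunc_log 2 #|V|).+1 ^ k).
Proof.
exists 12, 1 => V e s p h sel pick [e_sym _] _ _ bfsT heavyT selT pickT.
split=> [x y lxy | a b _].
  have := light_pair_diameter_gt0 bfsT selT pickT lxy.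
  by have := size_Pi e s p sel pick x y; lia.
have [D0|D_gt0] := posnP (diameter e).
  rewrite D0 muln0 mul0n leqn0 cards_eq0; apply/eqP/setP => -[x y].
  rewrite !inE; apply/andP => -[lxy _].
  by have := light_pair_diameter_gt0 bfsT selT pickT lxy; rewrite D0.
apply: leq_trans (card_light_pairs_on_edge bfsT e_sym heavyT selT pickT a b) _.
by rewrite expn1 mulnA leq_mul2r mulnS; apply/orP; right; lia.
Qed.
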